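(* Let $k\ge 2$ be an integer and let $P=(p_{ij})$ be the $2^k\times 2^k$ matrix with $p_{ij}=1$ if there is $n\in\{1,\dots,2^k\}$ with $i=\sigma^{-1}_{2^k}(n)$ and $j=\sigma^{-1}_{2^k}(n-1)$ (with the convention $\sigma^{-1}_{2^k}(0)=\sigma^{-1}_{2^k}(2^k)$), and $p_{ij}=0$ otherwise. Then: (i) for every $m=1,\dots,2^{k-2}$, the position $(\sigma^{-1}_{2^k}(4m-3),\sigma^{-1}_{2^k}(4m-4))$ lies in rows $1,\dots,2^{k-2}$ and columns $2^{k-1}+1,\dots,2^{k-1}+2^{k-2}$; (ii) for every $m=1,\dots,2^{k-2}$, the position $(\sigma^{-1}_{2^k}(4m-1),\sigma^{-1}_{2^k}(4m-2))$ lies in rows $2^{k-2}+1,\dots,2^{k-1}$ and columns $2^{k-1}+2^{k-2}+1,\dots,2^{k}$; (iii) for every $m=1,\dots,2^{k-1}$, the position $(\sigma^{-1}_{2^k}(2m),\sigma^{-1}_{2^k}(2m-1))$ lies in rows $2^{k-1}+1,\dots,2^{k}$ and columns $1,\dots,2^{k-1}$. Consequently, partitioning rows into consecutive groups of sizes $2^{k-2},2^{k-2},2^{k-1}$ and columns into consecutive groups of sizes $2^{k-1},2^{k-2},2^{k-2}$, $$P=\begin{pmatrix}0 & B_{2^{k-2}} & 0\\ 0 & 0 & C_{2^{k-2}}\\ C^*_{2^{k-1}} & 0 & 0\end{pmatrix},$$ where the square blocks $B_{2^{k-2}}$, $C_{2^{k-2}}$, $C^*_{2^{k-1}}$ contain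 exactly the $1$-entries of $P$ at the positions listed in (i), (ii), (iii) respectively, and all other entries of $P$ are zero.
   Context: For every integer $k\ge 0$ the map $\sigma^{-1}_{2^k}:\{1,\dots,2^k\}\to\{1,\dots,2^k\}$ is defined recursively by $\sigma^{-1}_{2^0}(1)=1$ and, for $k\ge 1$ and $1\le n\le 2^{k-1}$, $\sigma^{-1}_{2^k}(2n-1)=\sigma^{-1}_{2^{k-1}}(n)$ and $\sigma^{-1}_{2^k}(2n)=2^k+1-\sigma^{-1}_{2^{k-1}}(n)$; it is a permutation of $\{1,\dots,2^k\}$. The matrix $P$ is the permutation matrix of the permutation $\sigma^{-1}_{2^k}(n+1)\mapsto\sigma^{-1}_{2^k}(n)$ (indices mod $2^k$), i.e. of the inverse of the ''disordered permutation'' $\sigma^{-1}_{2^k}(n)\mapsto\sigma^{-1}_{2^k}(n+1)$ describing one step of the dynamics on the superstable $2^k$-periodic orbit of a period-doubling cascade. *)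

From mathcomp Require Import all_boot all_order all_algebra.
Set Implicit Arguments. Unset Strict Implicit. Unset Printing Implicit Defensive.

(* sigma_inv k n = sigma^{-1}_{2^k}(n), 1-indexed, meaningful for 1 <= n <= 2^k:
   sigma^{-1}_{1}(1) = 1,
   sigma^{-1}_{2^(k+1)}(2m-1) = sigma^{-1}_{2^k}(m),
   sigma^{-1}_{2^(k+1)}(2m)   = 2^(k+1) + 1 - sigma^{-1}_{2^k}(m). *)
Fixpoint sigma_inv (k n : nat) : nat :=
  match k with
  | 0 => 1
  | k'.+1 => if odd n then sigma_inv k' (n.+1)./2
             else (2 ^ k'.+1).+1 - sigma_inv k' n./2
  end.

Definition sigma_inv_c (k n : nat) : nat :=
  sigma_inv k (if n == 0 then 2 ^ k else n).

(* The 2^k x 2^k matrix P; the entry at ordinals (i, j) is p_{i+1, j+1}: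
   p_{ij} = 1 iff there is n in {1..2^k} with i = sigma^{-1}(n), j = sigma^{-1}(n-1). *)
Definition Pmx (k : nat) : 'M[nat]_(2 ^ k) :=
  \matrix_(i < 2 ^ k, j < 2 ^ k)
    (if [exists n : 'I_(2 ^ k),
           (i.+1 == sigma_inv k n.+1) && (j.+1 == sigma_inv_c k n)]
     then 1 else 0).

From mathcomp Require Import all_boot all_order all_algebra zify.
Set Implicit Arguments. Unset Strict Implicit. Unset Printing Implicit Defensive.

(* One level of the recursion sends the odd position 2m-1 to sigma^{-1}_{2^(k-1)}(m),
   in the lower half, and the even position 2m to its mirror image in the upper half.
   Two levels therefore decide the quarter of sigma^{-1}(n) from n mod 4: residues
   1, 3, 0, 2 land in the first, second, third and fourth quarter respectively.
   The 1-entries of P sit at (sigma^{-1}(n+1), sigma^{-1}(n)); sorting them by n mod 4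
   (n = 0, 2 mod 4, or n odd) yields exactly the three blocks B, C and C*. *)

Lemma sigma_inv_double k m : sigma_inv k.+1 (2 * m) = (2 ^ k.+1).+1 - sigma_inv k m.
Proof. by rewrite /= mul2n odd_double doubleK. Qed.

Lemma sigma_inv_double_pred k m : 0 < m -> sigma_inv k.+1 (2 * m - 1) = sigma_inv k m.
Proof.
case: m => // m _.
by rewrite mul2n doubleS subn1 /= odd_double /= doubleK.
Qed.

Lemma sigma_inv_bounds k n : 0 < n <= 2 ^ k -> 0 < sigma_inv k n <= 2 ^ k.
Proof.
elim: k n => [|k IHk] n n_range; first by [].
have m_range : 0 < n.+1 %/ 2 <= 2 ^ k by move: n_range; rewrite expnS; lia.
have [n_odd | n_even] : n = 2 * (n.+1 %/ 2) - 1 \/ n = 2 * (n.+1 %/ 2) by lia.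
- by rewrite n_odd sigma_inv_double_pred ?expnS; have := IHk _ m_range; lia.
- by rewrite n_even sigma_inv_double !expnS; have := IHk _ m_range; lia.
Qed.

Lemma sigma_inv_odd_lower k m :
  0 < m <= 2 ^ k -> 0 < sigma_inv k.+1 (2 * m - 1) <= 2 ^ k.
Proof. by move=> m_range; rewrite sigma_inv_double_pred ?sigma_inv_bounds //; lia. Qed.

Lemma sigma_inv_even_upper k m :
  0 < m <= 2 ^ k -> 2 ^ k < sigma_inv k.+1 (2 * m) <= 2 ^ k.+1.
Proof.
by move=> m_range; rewrite sigma_inv_double expnS; have := sigma_inv_bounds m_range; lia.
Qed.

Section Quarters.

Variables (k m : nat).
Hypothesis m_range : 0 < m <= 2 ^ k.

Lemma sigma_inv_4m3_bounds : 0 < sigma_inv k.+2 (4 * m - 3) <= 2 ^ k.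
Proof.
have -> : 4 * m - 3 = 2 * (2 * m - 1) - 1 by lia.
by rewrite sigma_inv_double_pred ?sigma_inv_odd_lower //; lia.
Qed.

Lemma sigma_inv_4m1_bounds : 2 ^ k < sigma_inv k.+2 (4 * m - 1) <= 2 ^ k.+1.
Proof.
have -> : 4 * m - 1 = 2 * (2 * m) - 1 by lia.
by rewrite sigma_inv_double_pred ?sigma_inv_even_upper //; lia.
Qed.

Lemma sigma_inv_4m2_bounds :
  2 ^ k.+1 + 2 ^ k < sigma_inv k.+2 (4 * m - 2) <= 2 ^ k.+2.
Proof.
have -> : 4 * m - 2 = 2 * (2 * m - 1) by lia.
by rewrite sigma_inv_double !expnS; have := sigma_inv_odd_lower m_range; lia.
Qed.

Lemma sigma_inv_4m_bounds :
  2 ^ k.+1 < sigma_inv k.+2 (4 * m) <= 2 ^ k.+1 + 2 ^ k.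
Proof.
have -> : 4 * m = 2 * (2 * m) by lia.
rewrite sigma_inv_double.
by have := sigma_inv_even_upper m_range; rewrite !expnS; lia.
Qed.

End Quarters.

Lemma sigma_inv_c_pos k n : 0 < n -> sigma_inv_c k n = sigma_inv k n.
Proof. by rewrite /sigma_inv_c; case: n. Qed.

(* Position 4m-4 is taken cyclically: for m = 1 it is position 2^(k+2) = 4 * 2^k. *)
Lemma sigma_inv_c_4m4_bounds k m : 0 < m <= 2 ^ k ->
  2 ^ k.+1 < sigma_inv_c k.+2 (4 * m - 4) <= 2 ^ k.+1 + 2 ^ k.
Proof.
move=> m_range; case: (ltnP 1 m) => [m_gt1 | m_le1].
- rewrite sigma_inv_c_pos; last lia.
  have -> : 4 * m - 4 = 4 * (m - 1) by lia.
  by apply: sigma_inv_4m_bounds; lia.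
- have -> : 4 * m - 4 = 0 by lia.
  rewrite /sigma_inv_c eqxx.
  have -> : 2 ^ k.+2 = 4 * 2 ^ k by rewrite !expnS mulnA.
  by apply: sigma_inv_4m_bounds; rewrite leqnn expn_gt0.
Qed.

Definition blockB_entry k r c := exists2 m, 0 < m <= 2 ^ k &
  r = sigma_inv k.+2 (4 * m - 3) /\ c = sigma_inv_c k.+2 (4 * m - 4).

Definition blockC_entry k r c := exists2 m, 0 < m <= 2 ^ k &
  r = sigma_inv k.+2 (4 * m - 1) /\ c = sigma_inv k.+2 (4 * m - 2).

Definition blockCstar_entry k r c := exists2 m, 0 < m <= 2 ^ k.+1 &
  r = sigma_inv k.+2 (2 * m) /\ c = sigma_inv k.+2 (2 * m - 1).

Lemma blockB_entry_bounds k r c : blockB_entry k r c ->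
  0 < r <= 2 ^ k /\ 2 ^ k.+1 < c <= 2 ^ k.+1 + 2 ^ k.
Proof.
by case=> m m_range [-> ->]; split; [apply: sigma_inv_4m3_bounds | apply: sigma_inv_c_4m4_bounds].
Qed.

Lemma blockC_entry_bounds k r c : blockC_entry k r c ->
  2 ^ k < r <= 2 ^ k.+1 /\ 2 ^ k.+1 + 2 ^ k < c <= 2 ^ k.+2.
Proof.
by case=> m m_range [-> ->]; split; [apply: sigma_inv_4m1_bounds | apply: sigma_inv_4m2_bounds].
Qed.

Lemma blockCstar_entry_bounds k r c : blockCstar_entry k r c ->
  2 ^ k.+1 < r <= 2 ^ k.+2 /\ 0 < c <= 2 ^ k.+1.
Proof.
by case=> m m_range [-> ->]; split; [apply: sigma_inv_even_upper | apply: sigma_inv_odd_lower].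
Qed.

Lemma Pmx_eq1 k (i j : 'I_(2 ^ k)) : Pmx k i j = 1 <->
  exists2 n, n < 2 ^ k & i.+1 = sigma_inv k n.+1 /\ j.+1 = sigma_inv_c k n.
Proof.
rewrite mxE; split; first by case: existsP => // -[n /andP[/eqP-> /eqP->]] _; exists n.
case=> n n_lt [i_eq j_eq]; case: existsP => // -[].
by exists (Ordinal n_lt); rewrite /= i_eq j_eq !eqxx.
Qed.

Lemma Pmx_eq0 k (i j : 'I_(2 ^ k)) : Pmx k i j <> 1 -> Pmx k i j = 0.
Proof. by rewrite mxE; case: ifP. Qed.

Lemma mod4_cases q n : n < 4 * q ->
  [\/ exists2 m, 0 < m <= q & n = 4 * m - 4,
      exists2 m, 0 < m <= q & n = 4 * m - 2 |
      exists2 m, 0 < m <= 2 * q & n = 2 * m - 1].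
Proof.
move=> n_lt.
case: (n %% 4 =P 0) => [r0 | r_neq0]; first by apply: Or31; exists (n %/ 4).+1; lia.
case: (n %% 4 =P 2) => [r2 | r_neq2]; first by apply: Or32; exists (n %/ 4).+1; lia.
by apply: Or33; exists (n.+1 %/ 2); lia.
Qed.

Lemma Pmx_eq1_blocks k (i j : 'I_(2 ^ k.+2)) : Pmx k.+2 i j = 1 <->
  [\/ blockB_entry k i.+1 j.+1, blockC_entry k i.+1 j.+1 | blockCstar_entry k i.+1 j.+1].
Proof.
have pow4 : 2 ^ k.+2 = 4 * 2 ^ k by rewrite !expnS mulnA.
rewrite Pmx_eq1; split.
- case=> n n_lt; have := @mod4_cases (2 ^ k) n; rewrite -pow4.
  move=> /(_ n_lt) [] [m m_range ->] [-> ->].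
  + by apply: Or31; exists m => //; split => //; congr sigma_inv; lia.
  + apply: Or32; exists m => //; rewrite sigma_inv_c_pos; last lia.
    by split => //; congr sigma_inv; lia.
  + apply: Or33; exists m; first by rewrite expnS.
    by rewrite sigma_inv_c_pos; [split => //; congr sigma_inv | ]; lia.
- have pow4S : 2 ^ k.+2 = 2 * 2 ^ k.+1 by rewrite expnS.
  case=> -[m m_range [-> ->]].
  + by exists (4 * m - 4); [lia | split => //; congr sigma_inv; lia].
  + exists (4 * m - 2); first lia.
    by rewrite sigma_inv_c_pos; [split => //; congr sigma_inv | ]; lia.
  + exists (2 * m - 1); first lia.
    by rewrite sigma_inv_c_pos; [split => //; congr sigma_inv | ]; lia.
Qed.

Theorem lemma3 (k : nat) (hk : 2 <= k) :
  let q := 2 ^ (k - 2) in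
  let h := 2 ^ (k - 1) in
  (forall m, 1 <= m <= q ->
     (1 <= sigma_inv k (4 * m - 3) <= q) /\
     (h + 1 <= sigma_inv_c k (4 * m - 4) <= h + q)) /\
  (forall m, 1 <= m <= q ->
     (q + 1 <= sigma_inv k (4 * m - 1) <= h) /\
     (h + q + 1 <= sigma_inv k (4 * m - 2) <= 2 ^ k)) /\
  (forall m, 1 <= m <= h ->
     (h + 1 <= sigma_inv k (2 * m) <= 2 ^ k) /\
     (1 <= sigma_inv k (2 * m - 1) <= h)) /\
  (forall i j : 'I_(2 ^ k),
     let r := i.+1 in let c := j.+1 in
     ((1 <= r <= q) && (h + 1 <= c <= h + q) ->
        (Pmx k i j = 1 <-> exists2 m, 1 <= m <= q &
           r = sigma_inv k (4 * m - 3) /\ c = sigma_inv_c k (4 * m - 4))) /\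
     ((q + 1 <= r <= h) && (h + q + 1 <= c <= 2 ^ k) ->
        (Pmx k i j = 1 <-> exists2 m, 1 <= m <= q &
           r = sigma_inv k (4 * m - 1) /\ c = sigma_inv k (4 * m - 2))) /\
     ((h + 1 <= r <= 2 ^ k) && (1 <= c <= h) ->
        (Pmx k i j = 1 <-> exists2 m, 1 <= m <= h &
           r = sigma_inv k (2 * m) /\ c = sigma_inv k (2 * m - 1))) /\
     (~~ ((1 <= r <= q) && (h + 1 <= c <= h + q)) ->
      ~~ ((q + 1 <= r <= h) && (h + q + 1 <= c <= 2 ^ k)) ->
      ~~ ((h + 1 <= r <= 2 ^ k) && (1 <= c <= h)) ->
        Pmx k i j = 0)).
Proof.
case: k hk => [|[|k]] // _ q h.
have [-> ->] : q = 2 ^ k /\ h = 2 ^ k.+1 by rewrite /q /h !subSS !subn0.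
split; [|split; [|split]].
- move=> m m_range; have := sigma_inv_4m3_bounds m_range.
  by have := sigma_inv_c_4m4_bounds m_range; lia.
- move=> m m_range; have := sigma_inv_4m1_bounds m_range.
  by have := sigma_inv_4m2_bounds m_range; lia.
- move=> m m_range; have := sigma_inv_odd_lower m_range.
  by have := sigma_inv_even_upper m_range; lia.
move=> i j r c; have bB := @blockB_entry_bounds k r c.
have bC := @blockC_entry_bounds k r c; have bCs := @blockCstar_entry_bounds k r c.
split; [|split; [|split]].
- by move=> inB; rewrite Pmx_eq1_blocks; split=> [[// | /bC | /bCs] | ?]; [lia | lia | apply: Or31].
- by move=> inC; rewrite Pmx_eq1_blocks; split=> [[/bB | // | /bCs] | ?]; [lia | lia | apply: Or32].
- by move=> inCs; rewrite Pmx_eq1_blocks; split=> [[/bB | /bC | //] | ?]; [lia | lia | apply: Or33].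
- by move=> notB notC notCs; apply: Pmx_eq0; rewrite Pmx_eq1_blocks => -[/bB | /bC | /bCs]; lia.
Qed.
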